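(* Let $s(a,b)$ and $s(c,d)$ be proper $n$-sided one-step dice with $s(a,b)>s(c,d)$. Then there are integers $x,y,z$ such that the ordered pair $(s(a,b),s(c,d))$ has one of the following four forms: (1) $s(a,b)=s(x,y)$ and $s(c,d)=s(y,z)$; (2) $s(a,b)=s(x,y)$ and $s(c,d)=s(z,x+2)$; (3) $s(a,b)=s(x+1,y)$ and $s(c,d)=s(x,z)$; (4) $s(a,b)=s(x,y+1)$ and $s(c,d)=s(z,y)$.
   Context: Let $n\ge 3$. An $n$-sided die is a non-decreasing $n$-tuple of integers $(a_1,\dots,a_n)$. The standard die is $P_n=(1,2,\dots,n)$. For integers $a,b$ with $1\le a\le n-1$, $2\le b\le n$ and $b\notin\{a,a+1\}$, let $s(a,b)$ denote the die obtained from $P_n$ by replacing the face with value $a$ by $a+1$ and the face with value $b$ by $b-1$ (faces then arranged in non-decreasing order); these are the proper $n$-sided one-step dice. For two $n$-sided dice $A=(a_1,\dots,a_n)$, $B=(b_1,\dots,b_n)$ we write $A>B$ (''$A$ beats $B$'') if $\#\{(i,j): a_i>b_j\} > \#\{(i,j): b_j>a_i\}$, where $(i,j)$ ranges over $\{1,\dots,n\}^2$; if the two counts are equal, $A$ and $B$ tie. *)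

(* Dice are sequences of naturals (all faces of one-step
   dice are in 1..n, so natural numbers suffice). *)
From mathcomp Require Import all_boot.
Set Implicit Arguments. Unset Strict Implicit. Unset Printing Implicit Defensive.

Definition std_die (n : nat) : seq nat := iota 1 n.

Definition one_step (n a b : nat) : seq nat :=
  sort leq [seq (if i == a then a.+1 else if i == b then b.-1 else i)
           | i <- std_die n].

Definition proper_step (n a b : nat) : bool :=
  [&& 1 <= a, a <= n.-1, 2 <= b, b <= n, b != a & b != a.+1].

Definition wins (A B : seq nat) : nat :=
  \sum_(x <- A) count (fun y => y < x) B.

Definition beats (A B : seq nat) : bool := wins B A < wins A B.

From mathcomp Require Import all_boot all_algebra zify ring.
Import GRing.Theory Num.Theory.

(* Write cmp x y = [y < x] - [x < y] and let the margin of A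
   over B be the double sum of cmp x y over the faces x of A and y of B, so
   that A beats B iff the margin is positive.  The margin is additive in each
   die, and s(a,b) differs from P_n by the signed multiset
   {a+1} - {a} + {b-1} - {b}.  Since the margin of P_n over itself is zero and
   the row sums r(x) = sum_j cmp x j over P_n grow by exactly 2 from x to x+1,
   the two terms linear in one perturbation vanish (r(a+1) - r(a) and
   r(b-1) - r(b) cancel), leaving only the interaction of the two
   perturbations: a signed count of coincidences between the changed faces
   of s(a,b) and those of s(c,d).  That count is positive only if c = b, d = a+2, a = c+1 or b = d+1,
   and these four coincidences are exactly the four forms of the theorem. *)

Local Open Scope ring_scope.

Definition cmp (x y : nat) : int := (y < x)%N%:R - (x < y)%N%:R.

Definition margin (A B : seq nat) : int := \sum_(x <- A) \sum_(y <- B) cmp x y.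

Lemma count_natr_sum (T : Type) (p : pred T) (s : seq T) :
  (count p s)%:R = \sum_(x <- s) (p x)%:R :> int.
Proof. by elim: s => [|x s IH]; rewrite ?big_nil ?big_cons //= natrD IH. Qed.

Lemma margin_winsE (A B : seq nat) : margin A B = (wins A B)%:R - (wins B A)%:R.
Proof.
rewrite /margin /wins !natr_sum.
under [X in _ - X]eq_bigr => y _ do rewrite count_natr_sum.
under eq_bigr => x _ do rewrite count_natr_sum.
rewrite [X in _ - X]exchange_big -sumrB.
by apply: eq_bigr => x _; rewrite -sumrB.
Qed.

Lemma beats_margin (A B : seq nat) : beats A B = (0 < margin A B).
Proof. by rewrite margin_winsE subr_gt0 ltr_nat. Qed.

Lemma cmpC (x y : nat) : cmp y x = - cmp x y.
Proof. by rewrite /cmp opprB. Qed.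

Lemma margin_sym (A B : seq nat) : margin B A = - margin A B.
Proof.
rewrite /margin exchange_big -sumrN; apply: eq_bigr => y _.
by rewrite -sumrN; apply: eq_bigr => x _; rewrite cmpC.
Qed.

Lemma margin_self (A : seq nat) : margin A A = 0.
Proof. by have := margin_sym A A; lia. Qed.

Definition step_face (a b i : nat) : nat :=
  if i == a then a.+1 else if i == b then b.-1 else i.

Lemma one_step_perm (n a b : nat) :
  perm_eq (one_step n a b) [seq step_face a b i | i <- iota 1 n].
Proof. by rewrite /one_step perm_sort. Qed.

Lemma sum_indicator (R : zmodType) (r : seq nat) (a : nat) (v : R) :
  uniq r -> a \in r -> \sum_(i <- r) (if i == a then v else 0) = v.
Proof.
move=> ur ar; rewrite (bigD1_seq a) //= eqxx big1 ?addr0 // => i /negbTE -> //.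
Qed.

Lemma sum_step_face (R : zmodType) (F : nat -> R) (r : seq nat) (a b : nat) :
  uniq r -> a \in r -> b \in r -> a != b ->
  \sum_(i <- r) F (step_face a b i) =
  \sum_(i <- r) F i + (F a.+1 - F a) + (F b.-1 - F b).
Proof.
move=> ur ar br ab.
rewrite (eq_bigr (fun i => F i + (if i == a then F a.+1 - F a else 0)
                              + (if i == b then F b.-1 - F b else 0))).
  by rewrite !big_split /= !sum_indicator.
move=> i _; rewrite /step_face; case: eqP => [->|_].
  by rewrite (negbTE ab) addr0 addrC subrK.
by case: eqP => [->|_]; rewrite ?addr0 // addrC subrK.
Qed.

Definition rank_sum (n x : nat) : int := \sum_(j <- iota 1 n) cmp x j.

Lemma rank_sum_succ (n p : nat) :
  (1 <= p)%N -> (p < n)%N -> rank_sum n p.+1 - rank_sum n p = 2.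
Proof.
move=> p1 pn; have ur := iota_uniq 1 n.
have pin : p \in iota 1 n by rewrite mem_iota; lia.
have p1in : p.+1 \in iota 1 n by rewrite mem_iota; lia.
rewrite /rank_sum -sumrB (eq_bigr (fun j => (if j == p then 1 else 0)
                                          + (if j == p.+1 then 1 else 0))).
  by rewrite big_split /= !sum_indicator.
move=> j _; rewrite /cmp; case: (j =P p) => [->|jp].
  by rewrite (_ : (p == p.+1) = false); lia.
by case: (j =P p.+1) => [->|jp1]; lia.
Qed.

Lemma proper_step_range {n a b : nat} : proper_step n a b ->
  [/\ (1 <= a)%N, (a < n)%N, (2 <= b)%N, (b <= n)%N & a != b].
Proof.
by case/and5P=> a1 an b2 bn /andP[ba _]; split; rewrite 1?eq_sym //; lia.
Qed.

(* Hence s(a,b) has the same margin as P_n against P_n: the row sums are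
   affine in the face value. *)
Lemma rank_sum_step {n a b : nat} : proper_step n a b ->
  (rank_sum n a.+1 - rank_sum n a) + (rank_sum n b.-1 - rank_sum n b) = 0.
Proof.
case/proper_step_range=> a1 an b2 bn _.
have := @rank_sum_succ n b.-1; rewrite prednK; last lia.
by rewrite rank_sum_succ //; lia.
Qed.

Lemma sum_one_step (R : zmodType) (F : nat -> R) {n a b : nat} :
  proper_step n a b ->
  \sum_(y <- one_step n a b) F y =
  \sum_(i <- iota 1 n) F i + (F a.+1 - F a) + (F b.-1 - F b).
Proof.
move=> pab; have [a1 an b2 bn ab] := proper_step_range pab.
rewrite (perm_big _ (one_step_perm n a b)) big_map sum_step_face ?iota_uniq //;
  by rewrite mem_iota; lia.
Qed.

(* Change of the row sum of x when the standard die is replaced by s(c,d). *)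
Definition cross (c d x : nat) : int :=
  (cmp x c.+1 - cmp x c) + (cmp x d.-1 - cmp x d).

(* Summed over the standard die, cross vanishes: by antisymmetry this is
   rank_sum_step for s(c,d). *)
Lemma sum_cross (n c d : nat) : proper_step n c d ->
  \sum_(i <- iota 1 n) cross c d i = 0.
Proof.
move=> pcd; have sum_cmp (v : nat) : \sum_(i <- iota 1 n) cmp i v = - rank_sum n v.
  by rewrite /rank_sum -sumrN; apply: eq_bigr => i _; rewrite cmpC.
rewrite /cross big_split /= !(sumrB _ _ _ (cmp^~ _)) !sum_cmp.
by have := rank_sum_step pcd; lia.
Qed.

Lemma margin_one_step (n a b c d : nat) :
  proper_step n a b -> proper_step n c d ->
  margin (one_step n a b) (one_step n c d) =
  (cross c d a.+1 - cross c d a) + (cross c d b.-1 - cross c d b).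
Proof.
move=> pab pcd; rewrite /margin.
under eq_bigr => x _ do rewrite (sum_one_step _ _ pcd) -addrA.
rewrite (sum_one_step _ (fun x => rank_sum n x + cross c d x) pab) big_split /=.
have := margin_self (iota 1 n); rewrite /margin -/(rank_sum n _) => ->.
by rewrite sum_cross //; have := rank_sum_step pab; lia.
Qed.

(* For x <> c, c+1 the value cmp x c.+1 - cmp x c vanishes, so cross is a
   signed count of coincidences with the changed faces of s(c,d). *)
Lemma cross_indicator (c d x : nat) : (0 < d)%N ->
  cross c d x = ((x == d.-1)%:R + (x == d)%:R) - ((x == c)%:R + (x == c.+1)%:R).
Proof. by move=> d0; rewrite /cross /cmp; lia. Qed.

(* The signed multiset s(a,b) - P_n, evaluated at the value y. *)
Definition face_change (a b y : nat) : int :=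
  (a.+1 == y)%:R - (a == y)%:R + (b.-1 == y)%:R - (b == y)%:R.

(* Symmetric form of the margin: count the changes of s(a,b) at the values
   where s(c,d) changes. *)
Lemma cross_increment (a b c d : nat) : (0 < d)%N ->
  (cross c d a.+1 - cross c d a) + (cross c d b.-1 - cross c d b) =
  (face_change a b d.-1 + face_change a b d)
  - (face_change a b c + face_change a b c.+1).
Proof. by move=> d0; rewrite !cross_indicator // /face_change; ring. Qed.

Lemma eqb_iff (x y z w : nat) : (x = y <-> z = w) -> (x == y) = (z == w).
Proof. by case=> xy_zw zw_xy; apply/eqP/eqP. Qed.

Lemma face_change_pred (a b d : nat) : (0 < d)%N -> (0 < b)%N ->
  face_change a b d.-1 + face_change a b d =
  (d == a + 2)%N%:R - (d == a)%:R + (b == d.+1)%:R - (d == b.+1)%:R.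
Proof.
move=> d0 b0; rewrite /face_change.
rewrite (@eqb_iff a.+1 d.-1 d (a + 2)); last lia.
rewrite (@eqb_iff a d.-1 a.+1 d); last lia.
rewrite (@eqb_iff b.-1 d.-1 b d); last lia.
rewrite (@eqb_iff b.-1 d b d.+1); last lia.
rewrite (@eqb_iff b d.-1 d b.+1); last lia.
rewrite (@eqb_iff a d d a); last lia.
ring.
Qed.

Lemma face_change_succ (a b c : nat) : (0 < b)%N ->
  face_change a b c + face_change a b c.+1 =
  (c == a.+1)%:R - (a == c.+1)%:R + (b == c + 2)%N%:R - (b == c)%:R.
Proof.
move=> b0; rewrite /face_change.
rewrite (@eqb_iff a.+1 c c a.+1); last lia.
rewrite (@eqb_iff a.+1 c.+1 a c); last lia.
rewrite (@eqb_iff b.-1 c b c.+1); last lia.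
rewrite (@eqb_iff b.-1 c.+1 b (c + 2)); last lia.
ring.
Qed.

(* Only the four indicators with a positive sign can make the margin
   positive. *)
Lemma margin_pos_cases {n a b c d : nat} :
  proper_step n a b -> proper_step n c d ->
  0 < margin (one_step n a b) (one_step n c d) ->
  [\/ c = b, d = a + 2, a = c + 1 | b = d + 1]%N.
Proof.
move=> pab pcd; have [a1 _ b2 _ _] := proper_step_range pab.
have [c1 _ d2 _ _] := proper_step_range pcd.
rewrite margin_one_step // cross_increment ?face_change_pred ?face_change_succ; try lia.
move=> pos; case: (c =P b) => [|ncb]; first by constructor 1.
case: (d =P a + 2)%N => [|nd]; first by constructor 2.
case: (a =P c + 1)%N => [|na]; first by constructor 3.
case: (b =P d + 1)%N => [|nb]; first by constructor 4.
exfalso; move: pos; lia.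
Qed.

Local Close Scope ring_scope.

Theorem mainTheorem2 (n a b c d : nat) :
  3 <= n ->
  proper_step n a b -> proper_step n c d ->
  beats (one_step n a b) (one_step n c d) ->
  exists x y z : nat,
    [\/ [/\ proper_step n x y, proper_step n y z,
            one_step n a b = one_step n x y & one_step n c d = one_step n y z],
        [/\ proper_step n x y, proper_step n z (x + 2),
            one_step n a b = one_step n x y & one_step n c d = one_step n z (x + 2)],
        [/\ proper_step n (x + 1) y, proper_step n x z,
            one_step n a b = one_step n (x + 1) y & one_step n c d = one_step n x z]
      | [/\ proper_step n x (y + 1), proper_step n z y,
            one_step n a b = one_step n x (y + 1) & one_step n c d = one_step n z y]].
Proof.
move=> _ pab pcd; rewrite beats_margin => /(margin_pos_cases pab pcd).
case=> [c_b | d_a2 | a_c1 | b_d1].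
- by exists a, b, d; apply: Or41; split => //; rewrite -c_b.
- by exists a, b, c; apply: Or42; split => //; rewrite -d_a2.
- by exists c, b, d; apply: Or43; split => //; rewrite -a_c1.
- by exists a, d, c; apply: Or44; split => //; rewrite -b_d1.
Qed.
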